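(* Let $G$, $\Sigma_o$, a supervisor $S$ realized by $H$, secret initial states $X_{sec}\subseteq X_0$ and vulnerable events $\Sigma_v\subseteq\Sigma_o$ be given, let $M^s$ be the simplified All Attack Structure, and let $m$ be a single attack structure of $M^s$ with state set $Q^m$. Then the induced strategy $A_m$ is IS-detectable if and only if $Q^m\cap Q^+_{det}\neq\emptyset$.
   Context: A plant is a finite automaton $G=(X,\Sigma,\delta,X_0)$ with partial transition function $\delta$ (extended to strings), initial states $X_0\subseteq X$; $\mathcal{L}(G,x_0)=\{s:\delta(x_0,s)\text{ defined}\}$, $\mathcal{L}(G)=\bigcup_{x_0\in X_0}\mathcal{L}(G,x_0)$. $\Sigma=\Sigma_o\dot\cup\Sigma_{uo}=\Sigma_c\dot\cup\Sigma_{uc}$, $P:\Sigma^*\to\Sigma_o^*$ the natural projection. A supervisor is $S:P(\mathcal{L}(G))\to\Gamma=\{\gamma\subseteq\Sigma:\Sigma_{uc}\subseteq\gamma\}$, realized by a deterministic automaton $H=(Z,\Sigma,\xi,z_0)$ with $\xi(z,\sigma)\neq z\Rightarrow\sigma\in\Sigma_o$ and $\Delta_H(\xi(z_0,s))=S(P(s))$ for $s\in\mathcal{L}(S/G)$ ($\Delta_H(z)$ = events defined at $z$). For any map $T$ from observable strings to subsets of $\Sigma$, $\mathcal{L}(T/G,x_0)$ is defined by $\epsilon\in\mathcal{L}(T/G,x_0)$ and $s\sigma\in\mathcal{L}(T/G,x_0)$ iff $s\in\mathcal{L}(T/G,x_0)$, $s\sigma\in\mathcal{L}(G,x_0)$,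 $\sigma\in T(P(s))$; $\mathcal{L}(T/G)=\bigcup_{x_0}\mathcal{L}(T/G,x_0)$. Estimates: $\mathcal{E}^C_{T/G}(\alpha)=\{\delta(x_0,s):x_0\in X_0,s\in\mathcal{L}(T/G,x_0),P(s)=\alpha\}$, $\mathcal{E}^I_{T/G}(\alpha)=\{x_0\in X_0:\exists s\in\mathcal{L}(T/G,x_0),P(s)=\alpha\}$. An attacker is a map $A:P(\mathcal{L}(G))\to\Sigma_o\cup\{\epsilon\}$ with $A(\epsilon)=\epsilon$ and, for $\alpha\sigma\in P(\mathcal{L}(G))$, $A(\alpha\sigma)=\sigma$ if $\sigma\notin\Sigma_v$, $A(\alpha\sigma)\in\Sigma_v\cup\{\epsilon\}$ if $\sigma\in\Sigma_v$. It induces $g_A(\epsilon)=\epsilon$, $g_A(\alpha\sigma)=g_A(\alpha)A(\alpha\sigma)$ and $S_A=S\circ g_A$. $A$ is stealthy along $\alpha\in P(\mathcal{L}(S_A/G))$ if $\mathcal{E}^C_{S/G}(g_A(\alpha))\neq\emptyset$. $A$ is IS-detectable if there exist $\alpha\in\Sigma_o^*$, $\sigma\in\Sigma_o$ with $\alpha\sigma\in P(\mathcal{L}(S_A/G))$ such that $A$ is stealthy along $\alpha$ and $\mathcal{E}^I_{S_A/G}(\alpha\sigma)\subseteq X_{sec}$. Operators: for $q\subseteq X$, $\gamma\subseteq\Sigma$, $\sigma\in\Sigma_o$: $\textsf{UR}_\gamma(q)=\{\delta(x,s):x\in q,s\in(\Sigma_{uo}\cap\gamma)^*\}$, $\textsf{NX}_\sigma(q)=\{\delta(x,\sigma):x\in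 q\}$, $\textsf{NX}_\epsilon(q)=q$, $\mathcal{O}(q,\gamma)=\{\sigma\in\Sigma_o\cap\gamma:\exists x\in q,\exists w\in(\Sigma_{uo}\cap\gamma)^*,\delta(x,w\sigma)\text{ defined}\}$. Augmented system: states $\tilde X\subseteq X_0\times X$, $\tilde X_0=\{(x_0,x_0)\}$, $\tilde\delta((x_0,x),\sigma)=(x_0,\delta(x,\sigma))$; $\widetilde{\textsf{UR}},\widetilde{\textsf{NX}},\mathcal{O}(\tilde q,\gamma)$ defined analogously; $I(\tilde q)=\{x_0:(x_0,x)\in\tilde q\text{ for some }x\}$. All Attack Structure (AAS): for $\sigma\in\Sigma_o$, $\hat\sigma$ is a doctored copy, $\hat\epsilon$ an erasure symbol; $\mathcal{V}(\sigma)=\{\hat\sigma':\sigma'\in\Sigma_v\}\cup\{\hat\epsilon\}$ if $\sigma\in\Sigma_v$, else $\{\hat\sigma\}$. $M=(Q,\Sigma_M,f,q_0)$, $\Sigma_M=\Sigma_o\cup\{\hat\sigma:\sigma\in\Sigma_o\}\cup\{\hat\epsilon\}$, $q_0=(X_0,\tilde X_0,z_0)$, states reachable from $q_0$, $Q=Q_e\dot\cup Q_a$: environment states $(q,\tilde q,z)$ with $q\subseteq X,\tilde q\subseteq\tilde X,z\in Z\cup\{z_{\textsf{att}}\}$ ($z_{\textsf{att}}$ new, $\Delta_H(z_{\textsf{att}})=\emptyset$); attack states $(q,\tilde q,z,\sigma)$. At $(q,\tilde q,z)$ enabled events are $\mathcal{O}(\tilde q,\Delta_H(z))$ if $z\in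 Z$, none if $z=z_{\textsf{att}}$, with $f((q,\tilde q,z),\sigma)=(q,\tilde q,z,\sigma)$. At $(q,\tilde q,z,\sigma)$ enabled events are $\mathcal{V}(\sigma)$, with $f((q,\tilde q,z,\sigma),\hat\sigma_a)=(q',\tilde q',z')$, $q'=\textsf{NX}_{\sigma_a}(\textsf{UR}_{\Delta_H(z)}(q))$, $\tilde q'=\widetilde{\textsf{NX}}_\sigma(\widetilde{\textsf{UR}}_{\Delta_H(z)}(\tilde q))$, $z'=\xi(z,\sigma_a)$ if $q'\ne\emptyset$ (with $\xi(z,\epsilon)=z$), $z'=z_{\textsf{att}}$ otherwise. Extended strings $h\in\mathcal{L}_e$ are those leading from $q_0$ to an environment state; for $h=\sigma_1\hat\sigma_{a1}\cdots\sigma_n\hat\sigma_{an}$, $\textsf{obs}(h)=\sigma_1\cdots\sigma_n$. Environment state $(q,\tilde q,z)$ is positive detected if $I(\tilde q)\subseteq X_{sec}$ (set $Q^+_{det}$), negative detected if $I(\tilde q)\cap X_{sec}=\emptyset$ (set $Q^-_{det}$), $Q_{det}=Q^+_{det}\cup Q^-_{det}$; it is undetectable (set $Q_{ud}$) if $I(\tilde q)\cap X_{sec}\neq\emptyset$ and for every $(x_0,x)\in\widetilde{\textsf{UR}}_{\Delta_H(z)}(\tilde q)$ with $x_0\in X_{sec}$ there exists $(x_0',x)\in\widetilde{\textsf{UR}}_{\Delta_H(z)}(\tilde q)$ with $x_0'\notin X_{sec}$. The simplified AAS $M^s=(Q^s,\Sigma_M,f^s,q_0)$ is the part of $M$ reachable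 from $q_0$ after removing all outgoing transitions from states in $Q_{det}\cup Q_{ud}$. A single attack structure (SAS) of $M^s$ is a sub-automaton $m=(Q^m,\Sigma_M,f^m,q_0)$ of $M^s$ (states $Q^m=Q'_a\cup Q'_e$ reachable from $q_0$, transitions a subset of those of $M^s$) such that every attack state in $Q'_a$ has exactly one enabled event in $m$, and every environment state in $Q'_e$ has in $m$ all the enabled events it has in $M^s$. For an observation $\alpha$, $\textsf{obs}^{-1}_m(\alpha)$ denotes the (at most one) extended string $h$ of $m$ with $\textsf{obs}(h)=\alpha$. The induced strategy $A_m$ is: $A_m(\epsilon)=\epsilon$; for nonempty $\alpha\in P(\mathcal{L}(G))$, if $\textsf{obs}^{-1}_m(\alpha)$ exists and its last event is $\hat\sigma_a$ then $A_m(\alpha)=\sigma_a$ (with $\sigma_a=\epsilon$ for $\hat\epsilon$); otherwise $A_m(\alpha)$ is the last event of $\alpha$. *)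

From HB Require Import structures.
From mathcomp Require Import all_boot.
From mathcomp Require Import boolp.

Set Implicit Arguments.
Unset Strict Implicit.
Unset Printing Implicit Defensive.

(* Events of the All Attack Structure: Ev s = the observed event s (a
   "plain" event of Sigma_o), Hat (Some s') = the doctored copy hat s',
   Hat None = the erasure symbol hat epsilon. *)
Inductive evM (E : Type) : Type := Ev of E | Hat of option E.
Arguments Ev {E}.
Arguments Hat {E}.

Section IS.

Variables (X E : finType).
Variable delta : X -> E -> option X.
Variable X0 : {set X}.
Variable obs : pred E.
Variable ctrl : pred E.

Definition dstar (x : X) (s : seq E) : option X :=
  foldl (fun ox e => if ox is Some y then delta y e else None) (Some x) s.

Definition proj (s : seq E) : seq E := filter obs s.

Definition inPLG (a : seq E) : Prop :=
  exists x0 s, x0 \in X0 /\ dstar x0 s <> None /\ proj s = a.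

Inductive LTG (T : seq E -> {set E}) (x0 : X) : seq E -> Prop :=
| LTG_nil : LTG T x0 [::]
| LTG_rcons s e : LTG T x0 s -> dstar x0 (rcons s e) <> None ->
    e \in T (proj s) -> LTG T x0 (rcons s e).

Definition inPLTG (T : seq E -> {set E}) (a : seq E) : Prop :=
  exists x0 s, x0 \in X0 /\ LTG T x0 s /\ proj s = a.

Definition EstC (T : seq E -> {set E}) (a : seq E) : {set X} :=
  [set x | `[< exists x0 s, x0 \in X0 /\ LTG T x0 s /\ proj s = a
                            /\ dstar x0 s = Some x >] ].
Definition EstI (T : seq E -> {set E}) (a : seq E) : {set X} :=
  [set x0 | `[< x0 \in X0 /\ exists s, LTG T x0 s /\ proj s = a >] ].

(* (None = eps).                                                        *)
(* g_A(eps) = eps, g_A(alpha sigma) = g_A(alpha) A(alpha sigma) *)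
Definition gA (A : seq E -> option E) (a : seq E) : seq E :=
  pmap (fun i => A (take i.+1 a)) (iota 0 (size a)).

Definition SA (S : seq E -> {set E}) (A : seq E -> option E) :
  seq E -> {set E} := fun a => S (gA A a).

Definition stealthy (S : seq E -> {set E}) (A : seq E -> option E)
  (a : seq E) : Prop := EstC S (gA A a) != set0.

Definition IS_detectable (S : seq E -> {set E}) (Xsec : {set X})
  (A : seq E -> option E) : Prop :=
  exists (a : seq E) (e : E), obs e /\ inPLTG (SA S A) (rcons a e) /\
    stealthy S A a /\ EstI (SA S A) (rcons a e) \subset Xsec.

Variables (Z : finType) (xi : Z -> E -> option Z) (z0 : Z).

Definition xistar (z : Z) (s : seq E) : option Z :=
  foldl (fun oz e => if oz is Some y then xi y e else None) (Some z) s.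

Definition DeltaH (z : Z) : {set E} := [set e | xi z e != None].

Definition is_supervisor (S : seq E -> {set E}) : Prop :=
  forall a, inPLG a -> [set e | ~~ ctrl e] \subset S a.

Definition realizes (S : seq E -> {set E}) : Prop :=
  (forall z e z', xi z e = Some z' -> z' != z -> obs e) /\
  (forall x0 s, x0 \in X0 -> LTG S x0 s ->
     exists z, xistar z0 s = Some z /\ DeltaH z = S (proj s)).

Variables (Xsec : {set X}) (Ev_v : {set E}).

(* states (q, qt, z, flag): z = None is z_att; flag = None for an
   environment state, flag = Some sigma for the attack state
   (q, qt, z, sigma). *)
Definition stateM : Type := ({set X} * {set (X * X)} * option Z * option E)%type.

Definition DeltaM (oz : option Z) : {set E} :=
  if oz is Some z then DeltaH z else set0.

Definition uo_in (g : {set E}) (w : seq E) : bool :=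
  all (fun e => (e \in g) && ~~ obs e) w.

Definition UR (g : {set E}) (q : {set X}) : {set X} :=
  [set y | `[< exists x w, x \in q /\ uo_in g w /\ dstar x w = Some y >] ].

Definition URt (g : {set E}) (qt : {set (X * X)}) : {set (X * X)} :=
  [set p | `[< exists x w, (p.1, x) \in qt /\ uo_in g w /\ dstar x w = Some p.2 >] ].

Definition NX (oa : option E) (q : {set X}) : {set X} :=
  if oa is Some e then [set y | [exists x in q, delta x e == Some y]] else q.

Definition NXt (e : E) (qt : {set (X * X)}) : {set (X * X)} :=
  [set p | [exists x, ((p.1, x) \in qt) && (delta x e == Some p.2)]].

Definition Ot (qt : {set (X * X)}) (g : {set E}) : {set E} :=
  [set e | obs e && (e \in g) &&
     `[< exists p w, p \in qt /\ uo_in g w /\ dstar p.2 (rcons w e) <> None >] ].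

Definition Iset (qt : {set (X * X)}) : {set X} :=
  [set x0 | [exists x, (x0, x) \in qt]].

Definition Vset (e : E) : {set option E} :=
  if e \in Ev_v then [set oa | if oa is Some e' then e' \in Ev_v else true]
  else [set Some e].

Definition q0M : stateM :=
  (X0, [set (x, x) | x in X0], Some z0, None).

Definition fM (s : stateM) (ev : evM E) : option stateM :=
  let: (q, qt, oz, fl) := s in
  match fl, ev with
  | None, Ev e =>
      if e \in Ot qt (DeltaM oz) then Some (q, qt, oz, Some e) else None
  | Some e, Hat oa =>
      if oa \in Vset e then
        let q' := NX oa (UR (DeltaM oz) q) in
        let qt' := NXt e (URt (DeltaM oz) qt) in
        let z' := if q' == set0 then None else
                  match oz with
                  | Some z => if oa is Some a then xi z a else Some z
                  | None => None
                  end in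
        Some (q', qt', z', None)
      else None
  | _, _ => None
  end.

Definition is_env (s : stateM) : bool := s.2 == None.

Definition posdet (s : stateM) : bool :=
  is_env s && (Iset s.1.1.2 \subset Xsec).
Definition negdet (s : stateM) : bool :=
  is_env s && [disjoint Iset s.1.1.2 & Xsec].
Definition det (s : stateM) : bool := posdet s || negdet s.
Definition undet (s : stateM) : bool :=
  let: (q, qt, oz, fl) := s in
  let u := URt (DeltaM oz) qt in
  (fl == None) && (Iset qt :&: Xsec != set0) &&
  [forall p in u, (p.1 \in Xsec) ==>
     [exists x0', ((x0', p.2) \in u) && (x0' \notin Xsec)]].

Definition fMs (s : stateM) (ev : evM E) : option stateM :=
  if det s || undet s then None else fM s ev.

Inductive reach (f : stateM -> evM E -> option stateM) : stateM -> Prop :=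
| reach0 : reach f q0M
| reachS s ev s' : reach f s -> f s ev = Some s' -> reach f s'.

Definition fstar (f : stateM -> evM E -> option stateM) (s : stateM)
  (h : seq (evM E)) : option stateM :=
  foldl (fun os ev => if os is Some t then f t ev else None) (Some s) h.

Definition is_SAS (fm : stateM -> evM E -> option stateM) : Prop :=
  (forall s ev s', reach fm s -> fm s ev = Some s' -> fMs s ev = Some s') /\
  (forall s, reach fm s -> ~~ is_env s -> exists! ev, fm s ev <> None) /\
  (forall s ev, reach fm s -> is_env s -> fMs s ev <> None -> fm s ev <> None).

Definition inLe (fm : stateM -> evM E -> option stateM) (h : seq (evM E)) : Prop :=
  exists s, fstar fm q0M h = Some s /\ is_env s.

Fixpoint obsM (h : seq (evM E)) : seq E :=
  match h with
  | [::] => [::]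
  | Ev e :: h' => e :: obsM h'
  | Hat _ :: h' => obsM h'
  end.

Definition last_ev (h : seq (evM E)) : option (evM E) :=
  if h is x :: h' then Some (last x h') else None.

Definition Am (fm : stateM -> evM E -> option stateM) (a : seq E) : option E :=
  match a with
  | [::] => None
  | e :: a' =>
      match pselect (exists p : seq (evM E) * option E,
                       inLe fm p.1 /\ obsM p.1 = a /\ last_ev p.1 = Some (Hat p.2)) with
      | left H => (proj1_sig (cid H)).2
      | right _ => Some (last e a')
      end
  end.

End IS.

(* Along an extended string [h] of the single attack structure, the environment
   state reached records, up to unobservable reach, three views of the
   observation [a = obs h]: the augmented (initial state, current state)
   estimate of the plant under the attacked supervisor [S_A], the current-state
   estimate of the supervisor fed with the doctored observation [g_A a], and the
   state of [H] after [g_A a].  Its initial-state projection is therefore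
   [E^I_{S_A/G}(a)], so reaching a positive detected state is IS-detection.
   Conversely, following a detecting observation through [m] never gets stuck:
   a negative detected state would contradict the secret initial state of the
   detecting run, an undetectable one would provide a non-secret initial state
   with the same future, stealthiness keeps [H] out of [z_att] so the next event
   is enabled, and the attack state that follows has exactly one reaction. *)

From Pilot Require Import Defs.
From HB Require Import structures.
From mathcomp Require Import all_boot.
From mathcomp Require Import boolp.

Set Implicit Arguments.
Unset Strict Implicit.
Unset Printing Implicit Defensive.

Section Plant.
Variables (X E : finType) (delta : X -> E -> option X) (X0 : {set X}) (obs : pred E).
Local Notation dstar := (dstar delta).
Local Notation proj := (proj obs).
Local Notation LTG := (LTG delta obs).
Local Notation uo_in := (uo_in obs).
Local Notation UR := (UR delta obs).
Local Notation URt := (URt delta obs).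
Local Notation NX := (NX delta).
Local Notation NXt := (NXt delta).
Local Notation EstC := (EstC delta X0 obs).
Local Notation EstI := (EstI delta X0 obs).
Local Notation Ot := (Ot delta obs).

Lemma dstar_cat x s1 s2 : dstar x (s1 ++ s2) = obind (dstar^~ s2) (dstar x s1).
Proof.
rewrite /Defs.dstar foldl_cat; case: (foldl _ _ s1) => [y|] //=.
by elim: s2.
Qed.

Lemma dstar_rcons x s e : dstar x (rcons s e) = obind (delta^~ e) (dstar x s).
Proof. by rewrite -cats1 dstar_cat; case: (dstar x s). Qed.

Lemma proj_cat s1 s2 : proj (s1 ++ s2) = proj s1 ++ proj s2.
Proof. exact: filter_cat. Qed.

Lemma proj_rcons s e : proj (rcons s e) = if obs e then rcons (proj s) e else proj s.
Proof. exact: filter_rcons. Qed.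

Lemma uo_in_cat g w1 w2 : uo_in g (w1 ++ w2) = uo_in g w1 && uo_in g w2.
Proof. exact: all_cat. Qed.

Lemma uo_in_proj g w : uo_in g w -> proj w = [::].
Proof. by elim: w => //= e w IH /andP[/andP[_ /negbTE ->] /IH]. Qed.

Lemma proj_split s u v : proj s = u ++ v ->
  exists s1 s2, [/\ s = s1 ++ s2, proj s1 = u & proj s2 = v].
Proof.
elim: s u => [|e s IH] [|a u] /=.
- by case: v => // _; exists [::], [::].
- by [].
- by move=> Hv; exists [::], (e :: s).
case: ifP => Ho.
  case=> <- Hs; have [s1 [s2 [-> <- <-]]] := IH _ Hs.
  by exists (e :: s1), s2; rewrite /= Ho.
move=> Hs; have [s1 [s2 [-> Hs1 <-]]] := IH (a :: u) Hs.
by exists (e :: s1), s2; rewrite /= Ho Hs1.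
Qed.

Lemma proj_rsplit s u e : proj s = rcons u e ->
  exists s1 w, [/\ s = s1 ++ e :: w, proj s1 = u & proj w = [::]].
Proof.
elim/last_ind: s => [|s a IH]; first by case: u.
rewrite proj_rcons; case: ifP => Ha.
  by case/rcons_inj=> <- <-; exists s, [::]; rewrite cats1.
move=> /IH[s1 [w [-> Hs1 Hw]]]; exists s1, (rcons w a).
by rewrite rcons_cat rcons_cons proj_rcons Ha.
Qed.

Lemma LTG_rconsE T x0 s e : LTG T x0 (rcons s e) ->
  [/\ LTG T x0 s, dstar x0 (rcons s e) <> None & e \in T (proj s)].
Proof.
move Et: (rcons s e) => t Ht; case: t / Ht Et => [|s' e' Hs Hd He] Et.
  by case: s Et.
by case/rcons_inj: Et => -> ->.
Qed.

Lemma LTG_dstar T x0 s : LTG T x0 s -> exists x, dstar x0 s = Some x.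
Proof.
case=> [|s' e _ Hd _]; first by exists x0.
by case: (dstar x0 (rcons s' e)) Hd => [x _|//]; exists x.
Qed.

Lemma LTG_catl T x0 s1 s2 : LTG T x0 (s1 ++ s2) -> LTG T x0 s1.
Proof.
elim/last_ind: s2 => [|s2 e IH]; first by rewrite cats0.
by rewrite -rcons_cat => /LTG_rconsE[/IH].
Qed.

Lemma LTG_cat_uo T x0 s y w x : LTG T x0 s -> dstar x0 s = Some y ->
  uo_in (T (proj s)) w -> dstar y w = Some x -> LTG T x0 (s ++ w).
Proof.
move=> Hs Hy; elim/last_ind: w x => [|w e IH] x; first by rewrite cats0.
rewrite /Defs.uo_in all_rcons dstar_rcons => /andP[/andP[He _] Hw].
case Hz: (dstar y w) => [z|] //= Hx.
rewrite -rcons_cat; constructor; first exact: IH Hw Hz.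
- by rewrite dstar_rcons dstar_cat Hy /= Hz /= Hx.
- by rewrite proj_cat (uo_in_proj Hw) cats0.
Qed.

Lemma LTG_uo_suffix T x0 s w : LTG T x0 (s ++ w) -> proj w = [::] -> uo_in (T (proj s)) w.
Proof.
elim/last_ind: w => [|w e IH] //.
rewrite -rcons_cat => /LTG_rconsE[Hs _ He].
rewrite proj_rcons /Defs.uo_in all_rcons.
case: ifP => [_|/negbT Ho Hw]; first by case: (proj w).
rewrite proj_cat Hw cats0 in He.
by rewrite He; exact: IH.
Qed.

Lemma LTG_splice T x0 x0' s1 s2 s1' : LTG T x0 (s1 ++ s2) -> LTG T x0' s1' ->
  proj s1' = proj s1 -> dstar x0' s1' = dstar x0 s1 -> LTG T x0' (s1' ++ s2).
Proof.
move=> Hs Hs' Hp Hd; elim/last_ind: s2 Hs => [|s2 e IH]; first by rewrite !cats0.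
rewrite -!rcons_cat => /LTG_rconsE[Hs Hde He]; constructor.
- exact: IH.
- by rewrite dstar_rcons dstar_cat Hd -dstar_cat -dstar_rcons.
- by rewrite proj_cat Hp -proj_cat.
Qed.

Definition run (T : seq E -> {set E}) (x0 : X) (b : seq E) (x : X) : Prop :=
  exists s, [/\ LTG T x0 s, proj s = b & dstar x0 s = Some x].

Lemma run_obs T x0 b x : run T x0 b x -> all obs b.
Proof. by case=> s [_ <- _]; exact: filter_all. Qed.

Lemma run_nilP T x0 x :
  run T x0 [::] x <-> exists2 w, uo_in (T [::]) w & dstar x0 w = Some x.
Proof.
split=> [[w [Hw Hp Hx]]|[w Hw Hx]].
  by exists w => //; exact: (@LTG_uo_suffix T x0 [::]).
exists w; split=> //; last exact: uo_in_proj Hw.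
by apply: (@LTG_cat_uo T x0 [::] x0 w x) => //; exact: LTG_nil.
Qed.

Lemma run_rconsP {T x0 b e x} : obs e ->
  run T x0 (rcons b e) x <-> e \in T b /\
  exists y y' w, [/\ run T x0 b y, delta y e = Some y',
                     uo_in (T (rcons b e)) w & dstar y' w = Some x].
Proof.
move=> Ho; split=> [[s [Hs Hp Hx]]|[He [y [y' [w [[s [Hs Hp Hy] Hy' Hw Hx]]]]]]].
  have [s1 [w [Es Hs1 Hw]]] := proj_rsplit Hp; subst s.
  move: Hs Hx; rewrite -cat_rcons => Hs.
  have /LTG_rconsE[Hs1' Hd He] := LTG_catl Hs.
  have [y Hy] := LTG_dstar Hs1'.
  move: Hd; rewrite dstar_rcons Hy /=; case Hy': (delta y e) => [y'|] // _.
  rewrite dstar_cat dstar_rcons Hy /= Hy' /= => Hx.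
  split; first by rewrite -Hs1.
  exists y, y', w; split=> //; first by exists s1.
  by have := LTG_uo_suffix Hs Hw; rewrite proj_rcons Ho Hs1.
exists (rcons s e ++ w); split.
- apply: (@LTG_cat_uo T x0 _ y' w x) => //.
  + by constructor=> //; rewrite ?dstar_rcons ?Hy ?Hp //= Hy'.
  + by rewrite dstar_rcons Hy.
  + by rewrite proj_rcons Ho Hp.
- by rewrite proj_cat proj_rcons Ho Hp (uo_in_proj Hw) cats0.
- by rewrite dstar_cat dstar_rcons Hy /= Hy'.
Qed.

(* The continuation of a run depends only on the observation so far and on the
   current state, not on the initial state. *)
Lemma run_cat T x0 u v x : run T x0 (u ++ v) x ->
  exists2 y, run T x0 u y & forall x0', run T x0' u y -> run T x0' (u ++ v) x.
Proof.
case=> s [Hs Hp Hx]; have [s1 [s2 [Es Hs1 Hs2]]] := proj_split Hp; subst s.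
have [y Hy] := LTG_dstar (LTG_catl Hs).
exists y; first by exists s1; split=> //; exact: LTG_catl Hs.
move=> x0' [s1' [Hs' Hp' Hy']]; exists (s1' ++ s2); split.
- by apply: LTG_splice Hs Hs' _ _; rewrite ?Hp' ?Hs1 ?Hy' ?Hy.
- by rewrite proj_cat Hp' Hs2.
- by rewrite dstar_cat Hy' /= -Hx dstar_cat Hy.
Qed.

Lemma inUR g (q : {set X}) y :
  reflect (exists x w, [/\ x \in q, uo_in g w & dstar x w = Some y]) (y \in UR g q).
Proof.
rewrite inE; apply: (iffP (asboolP _)) => [[x [w [? [? ?]]]]|[x [w [? ? ?]]]].
  by exists x, w.
by exists x, w.
Qed.

Lemma inURt g (qt : {set X * X}) p : reflect
  (exists x w, [/\ (p.1, x) \in qt, uo_in g w & dstar x w = Some p.2]) (p \in URt g qt).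
Proof.
rewrite inE; apply: (iffP (asboolP _)) => [[x [w [? [? ?]]]]|[x [w [? ? ?]]]].
  by exists x, w.
by exists x, w.
Qed.

Lemma inNX e (q : {set X}) y : reflect (exists2 x, x \in q & delta x e = Some y) (y \in NX (Some e) q).
Proof.
rewrite inE; apply: (iffP existsP) => [[x /andP[Hx /eqP Hy]]|[x Hx Hy]]; exists x => //.
by rewrite Hx Hy eqxx.
Qed.

Lemma inNXt e (qt : {set X * X}) p :
  reflect (exists2 x, (p.1, x) \in qt & delta x e = Some p.2) (p \in NXt e qt).
Proof.
rewrite inE; apply: (iffP existsP) => [[x /andP[Hx /eqP Hy]]|[x Hx Hy]]; exists x => //.
by rewrite Hx Hy eqxx.
Qed.

Lemma inIset (qt : {set X * X}) x0 : reflect (exists x, (x0, x) \in qt) (x0 \in Iset qt).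
Proof. by rewrite inE; apply: existsP. Qed.

Lemma subset_UR g (q : {set X}) : q \subset UR g q.
Proof. by apply/subsetP => x Hx; apply/inUR; exists x, [::]. Qed.

Lemma subset_URt g (qt : {set X * X}) : qt \subset URt g qt.
Proof. by apply/subsetP => -[x0 x] Hx; apply/inURt; exists x, [::]. Qed.

Lemma UR_id g (q : {set X}) : UR g (UR g q) = UR g q.
Proof.
apply/eqP; rewrite eqEsubset subset_UR andbT; apply/subsetP => y.
case/inUR=> x [w [/inUR[x' [w' [Hx' Hw' Hx]] Hw Hy]]].
apply/inUR; exists x', (w' ++ w); split=> //; first by rewrite uo_in_cat Hw' Hw.
by rewrite dstar_cat Hx.
Qed.

Lemma UR_eq0 g (q : {set X}) : (UR g q == set0) = (q == set0).
Proof.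
apply/idP/idP => [/eqP Hq|/eqP->]; first by rewrite -subset0 -Hq subset_UR.
apply/eqP/setP => y; rewrite in_set0; apply/negbTE/negP.
by case/inUR=> x [w []]; rewrite inE.
Qed.

Lemma URt_eq0 g (qt : {set X * X}) : (URt g qt == set0) = (qt == set0).
Proof.
apply/idP/idP => [/eqP Hq|/eqP->]; first by rewrite -subset0 -Hq subset_URt.
apply/eqP/setP => p; rewrite in_set0; apply/negbTE/negP.
by case/inURt=> x [w []]; rewrite inE.
Qed.

Lemma Iset_URt g (qt : {set X * X}) : Iset (URt g qt) = Iset qt.
Proof.
apply/setP => x0; apply/inIset/inIset => -[x Hx].
  by case/inURt: Hx => x' [w [Hx' _ _]]; exists x'.
by exists x; exact: subsetP (subset_URt g qt) _ Hx.
Qed.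

Lemma mem_Ot (qt : {set X * X}) g e : (e \in Ot qt g) = [&& obs e, e \in g & NXt e (URt g qt) != set0].
Proof.
rewrite inE -andbA; congr [&& _, _ & _]; apply/asboolP/set0Pn.
  case=> -[x0 x] [w [Hx [Hw]]]; rewrite dstar_rcons.
  case Hy: (dstar x w) => [y|] //=; case Hy': (delta y e) => [y'|] // _.
  by exists (x0, y'); apply/inNXt; exists y => //; apply/inURt; exists x, w.
case=> -[x0 y'] /inNXt[y /inURt[x [w [Hx Hw Hy]]] Hy'].
by exists (x0, x), w; split=> //; rewrite dstar_rcons Hy /= Hy'.
Qed.

Definition EstCt (T : seq E -> {set E}) (b : seq E) : {set X * X} :=
  [set p | (p.1 \in X0) && `[< run T p.1 b p.2 >]].

Lemma inEstC T b x : reflect (exists2 x0, x0 \in X0 & run T x0 b x) (x \in EstC T b).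
Proof.
rewrite inE; apply: (iffP (asboolP _)) => [[x0 [s [? [? [? ?]]]]]|[x0 ? [s [? ? ?]]]].
  by exists x0 => //; exists s.
by exists x0, s.
Qed.

Lemma inEstCt T b x0 x :
  reflect (x0 \in X0 /\ run T x0 b x) ((x0, x) \in EstCt T b).
Proof. by rewrite inE; apply: (iffP andP) => -[-> /asboolP]. Qed.

Lemma inEstI T b x0 : reflect (exists x, (x0, x) \in EstCt T b) (x0 \in EstI T b).
Proof.
rewrite inE; apply: (iffP (asboolP _)) => [[Hx0 [s [Hs Hp]]]|[x /inEstCt[Hx0 [s [? ? _]]]]].
  by have [x Hx] := LTG_dstar Hs; exists x; apply/inEstCt; split=> //; exists s.
by split=> //; exists s.
Qed.

Lemma EstI_Iset T b : EstI T b = Iset (EstCt T b).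
Proof. by apply/setP => x0; apply/inEstI/inIset. Qed.

Lemma inPLTG_EstCt T b : inPLTG delta X0 obs T b <-> EstCt T b != set0.
Proof.
split=> [[x0 [s [Hx0 [Hs Hp]]]]|/set0Pn[[x0 x] /inEstCt[Hx0 [s [Hs Hp _]]]]].
  have [x Hx] := LTG_dstar Hs.
  by apply/set0Pn; exists (x0, x); apply/inEstCt; split=> //; exists s.
by exists x0, s.
Qed.

Lemma EstC_nil T : EstC T [::] = UR (T [::]) X0.
Proof.
apply/setP => x; apply/inEstC/inUR => [[x0 Hx0 /run_nilP[w Hw Hx]]|[x0 [w [Hx0 Hw Hx]]]].
  by exists x0, w.
by exists x0 => //; apply/run_nilP; exists w.
Qed.

Lemma EstCt_nil T : EstCt T [::] = URt (T [::]) [set (x, x) | x in X0].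
Proof.
apply/setP => -[x0 x]; apply/inEstCt/inURt.
  case=> Hx0 /run_nilP[w Hw Hx].
  by exists x0, w; split=> //; apply/imsetP; exists x0.
case=> y [w [/imsetP[x1 Hx1 [-> ->]] Hw Hx]].
by split=> //; apply/run_nilP; exists w.
Qed.

Lemma EstC_rcons T b e : obs e -> EstC T (rcons b e) =
  if e \in T b then UR (T (rcons b e)) (NX (Some e) (EstC T b)) else set0.
Proof.
move=> Ho; apply/setP => x; case: ifP => He; last first.
  by rewrite in_set0; apply/negbTE/negP => /inEstC[x0 _ /(run_rconsP Ho)[]]; rewrite He.
apply/inEstC/inUR => [[x0 Hx0 /(run_rconsP Ho)[_ [y [y' [w [Hy Hy' Hw Hx]]]]]]|].
  by exists y', w; split=> //; apply/inNX; exists y => //; apply/inEstC; exists x0.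
case=> y' [w [/inNX[y /inEstC[x0 Hx0 Hy] Hy'] Hw Hx]].
by exists x0 => //; apply/(run_rconsP Ho); split=> //; exists y, y', w.
Qed.

Lemma EstCt_rcons T b e : obs e -> EstCt T (rcons b e) =
  if e \in T b then URt (T (rcons b e)) (NXt e (EstCt T b)) else set0.
Proof.
move=> Ho; apply/setP => -[x0 x]; case: ifP => He; last first.
  by rewrite in_set0; apply/negbTE/negP => /inEstCt[_ /(run_rconsP Ho)[]]; rewrite He.
apply/inEstCt/inURt => [[Hx0 /(run_rconsP Ho)[_ [y [y' [w [Hy Hy' Hw Hx]]]]]]|].
  by exists y', w; split=> //; apply/inNXt; exists y => //; apply/inEstCt.
case=> y' [w [/inNXt[y /inEstCt[Hx0 Hy] Hy'] Hw Hx]].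
by split=> //; apply/(run_rconsP Ho); split=> //; exists y, y', w.
Qed.

Lemma EstC_cat_neq0 T u v : EstC T (u ++ v) != set0 -> EstC T u != set0.
Proof.
case/set0Pn=> x /inEstC[x0 Hx0 /run_cat[y Hy _]].
by apply/set0Pn; exists y; apply/inEstC; exists x0.
Qed.

Lemma EstCt_cat T u v x0 x : (x0, x) \in EstCt T (u ++ v) ->
  exists2 y, (x0, y) \in EstCt T u &
    forall x0', (x0', y) \in EstCt T u -> (x0', x) \in EstCt T (u ++ v).
Proof.
case/inEstCt=> Hx0 /run_cat[y Hy Hcont]; exists y; first by apply/inEstCt.
by move=> x0' /inEstCt[Hx0' /Hcont Hr]; apply/inEstCt.
Qed.

End Plant.

Section Supervisor.
Variables (X E : finType) (delta : X -> E -> option X) (X0 : {set X}) (obs : pred E).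
Variables (S : seq E -> {set E}) (Z : finType) (xi : Z -> E -> option Z) (z0 : Z).
Hypothesis HH : realizes delta X0 obs xi z0 S.
Local Notation proj := (proj obs).
Local Notation LTG := (LTG delta obs).
Local Notation UR := (UR delta obs).
Local Notation NX := (NX delta).
Local Notation EstC := (EstC delta X0 obs).
Local Notation xistar := (xistar xi).
Local Notation DeltaH := (DeltaH xi).

Lemma xistar_rcons z s e : xistar z (rcons s e) = obind (xi^~ e) (xistar z s).
Proof. by rewrite /Defs.xistar -cats1 foldl_cat /=; case: foldl. Qed.

(* Unobservable events are self-loops of H, so H's state only depends on the observation. *)
Lemma xistar_proj x0 s : x0 \in X0 -> LTG S x0 s -> xistar z0 s = xistar z0 (proj s).
Proof.
move=> Hx0; elim=> [|s' e Hs IH _ He] //.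
have [z [Hz HD]] := HH.2 x0 s' Hx0 Hs.
move: He; rewrite -HD inE; case Hxi: (xi z e) => [z'|] // _.
rewrite xistar_rcons Hz /= Hxi proj_rcons.
case: ifP => Ho; first by rewrite xistar_rcons -IH Hz /= Hxi.
rewrite -IH Hz; case: (eqVneq z' z) => [-> //|/(HH.1 _ _ _ Hxi)].
by rewrite Ho.
Qed.

Lemma DeltaH_EstC g z x :
  x \in EstC S g -> xistar z0 g = Some z -> DeltaH z = S g.
Proof.
case/inEstC=> x0 Hx0 [s [Hs <- _]]; rewrite -(xistar_proj Hx0 Hs) => Hz.
by have [z' [Hz' <-]] := HH.2 x0 s Hx0 Hs; congr DeltaH; move: Hz'; rewrite Hz => -[].
Qed.

(* [q] is the current-state estimate of the supervisor fed with the doctored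
   observation [g], up to unobservable reach, and [z] is the state of [H] after
   [g]; [None] (that is, [z_att]) occurs exactly when that estimate is empty. *)
Definition sup_inv (g : seq E) (q : {set X}) (oz : option Z) : Prop :=
  if oz is Some z then
    [/\ xistar z0 g = Some z, DeltaH z = S g, UR (S g) q = EstC S g & q != set0]
  else EstC S g = set0.

Lemma sup_inv_init : X0 != set0 -> sup_inv [::] X0 (Some z0).
Proof.
move=> HX0; have HU : UR (S [::]) X0 = EstC S [::] by rewrite EstC_nil.
split=> //; case/set0Pn: HX0 => x Hx.
by apply: (@DeltaH_EstC [::] z0 x) => //; rewrite -HU; exact: subsetP (subset_UR _ _ _ _) _ Hx.
Qed.

Lemma sup_inv_erase g q z :
  sup_inv g q (Some z) ->
  sup_inv g (UR (DeltaH z) q) (if UR (DeltaH z) q == set0 then None else Some z).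
Proof.
case=> Hz HD HU Hq; rewrite UR_eq0 (negbTE Hq).
by split=> //; rewrite ?UR_eq0 // HD UR_id.
Qed.

Lemma sup_inv_replace g q z a : obs a -> sup_inv g q (Some z) ->
  let q' := NX (Some a) (UR (DeltaH z) q) in
  sup_inv (rcons g a) q' (if q' == set0 then None else xi z a).
Proof.
move=> Ho [Hz HD HU Hq] q'.
have HE : EstC S (rcons g a) =
    if xi z a is Some _ then UR (S (rcons g a)) q' else set0.
  by rewrite EstC_rcons // -HD inE /q' HD HU; case: (xi z a).
case: (eqVneq q' set0) => [Hq0|Hq'].
  by rewrite /= HE; case: (xi z a) => // _; apply/eqP; rewrite UR_eq0 Hq0.
case Hza: (xi z a) HE => [z'|] //= HE.
have Hz' : xistar z0 (rcons g a) = Some z' by rewrite xistar_rcons Hz.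
have [x Hx] : exists x, x \in EstC S (rcons g a) by apply/set0Pn; rewrite HE UR_eq0.
by split=> //; exact: DeltaH_EstC Hx Hz'.
Qed.

End Supervisor.

Section SingleAttackStructure.
Variables (X E : finType) (delta : X -> E -> option X) (X0 : {set X}) (obs : pred E).
Variables (Z : finType) (xi : Z -> E -> option Z) (z0 : Z).
Variables (Xsec : {set X}) (Ev_v : {set E}).
Variable fm : stateM X E Z -> evM E -> option (stateM X E Z).
Hypothesis Hm : is_SAS delta X0 obs xi z0 Xsec Ev_v fm.
Local Notation fM := (fM delta obs xi Ev_v).
Local Notation fMs := (fMs delta obs xi Xsec Ev_v).
Local Notation reach := (reach X0 z0 fm).
Local Notation q0 := (q0M E X0 z0).
Local Notation fstar := (fstar fm).

Lemma fM_alternates s ev s' : fM s ev = Some s' ->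
  if is_env s then ~~ is_env s' /\ exists e, ev = Ev e
  else is_env s' /\ exists oa, ev = Hat oa.
Proof.
case: s => [[[q qt] oz] [e|]]; case: ev => [e'|oa] //=; case: ifP => // _ [<-].
  by split=> //; exists oa.
by split=> //; exists e'.
Qed.

Lemma fm_fM s ev s' : reach s -> fm s ev = Some s' -> fM s ev = Some s'.
Proof. by move=> Hs /(Hm.1 _ _ _ Hs); rewrite /Defs.fMs; case: ifP. Qed.

Lemma fm_alternates s ev s' : reach s -> fm s ev = Some s' ->
  if is_env s then ~~ is_env s' /\ exists e, ev = Ev e
  else is_env s' /\ exists oa, ev = Hat oa.
Proof. by move=> Hs /(fm_fM Hs)/fM_alternates. Qed.

Inductive ext_reach : seq (evM E) -> stateM X E Z -> Prop :=
| ext_reach0 : ext_reach [::] q0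
| ext_reachS h s e sa oa s' : ext_reach h s -> fm s (Ev e) = Some sa ->
    fm sa (Hat oa) = Some s' -> ext_reach (h ++ [:: Ev e; Hat oa]) s'.

Lemma ext_reach_reach h s : ext_reach h s -> reach s.
Proof.
elim=> [|h' s' e sa oa s'' _ IH Hsa Hs'']; first exact: reach0.
exact: reachS (reachS IH Hsa) Hs''.
Qed.

Lemma ext_reach_env h s : ext_reach h s -> is_env s.
Proof.
elim=> // h' s' e sa oa s'' Hh IH Hsa Hs''; have Hs' := ext_reach_reach Hh.
have := fm_alternates Hs' Hsa; rewrite IH => -[Hatt _].
by have := fm_alternates (reachS Hs' Hsa) Hs''; rewrite (negbTE Hatt) => -[].
Qed.

Lemma ext_reach_attack h s e sa : ext_reach h s -> fm s (Ev e) = Some sa ->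
  reach sa /\ ~~ is_env sa.
Proof.
move=> Hh Hsa; have Hs := ext_reach_reach Hh; split; first exact: reachS Hs Hsa.
by have := fm_alternates Hs Hsa; rewrite (ext_reach_env Hh) => -[].
Qed.

Lemma fstar_cat s h1 h2 : fstar s (h1 ++ h2) = obind (fstar^~ h2) (fstar s h1).
Proof.
rewrite /Defs.fstar foldl_cat; case: (foldl _ _ h1) => [t|] //=.
by elim: h2.
Qed.

Lemma fstar_rcons s h ev : fstar s (rcons h ev) = obind (fm^~ ev) (fstar s h).
Proof. by rewrite -cats1 fstar_cat; case: (fstar s h). Qed.

Lemma ext_reach_fstar h s : ext_reach h s -> fstar q0 h = Some s.
Proof. by elim=> // h' s' e sa oa s'' _ IH Hsa Hs''; rewrite fstar_cat IH /Defs.fstar /= Hsa. Qed.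

Lemma fstar_ext_reach h s : fstar q0 h = Some s ->
  reach s /\ if is_env s then ext_reach h s else
    exists h0 e s0, [/\ h = rcons h0 (Ev e), ext_reach h0 s0 & fm s0 (Ev e) = Some s].
Proof.
elim/last_ind: h s => [|h ev IH] s; first by case=> <-; split; [exact: reach0|exact: ext_reach0].
rewrite fstar_rcons; case Ht: (fstar q0 h) => [t|] //= Hs.
have [Ht_reach IHt] := IH _ Ht; split; first exact: reachS Ht_reach Hs.
have := fm_alternates Ht_reach Hs; case: ifP IHt => _ IHt [Hs_env [x Eev]]; subst ev.
  by rewrite (negbTE Hs_env); exists h, x, t.
have [h0 [e [s0 [-> Hh0 Hs0]]]] := IHt.
by rewrite Hs_env -!cats1 -catA; exact: ext_reachS Hh0 Hs0 Hs.
Qed.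

Lemma reach_ext_reach s : reach s -> is_env s -> exists h, ext_reach h s.
Proof.
move=> Hs Hs_env; have [h Hh] : exists h, fstar q0 h = Some s.
  elim: Hs => [|t ev t' _ [h Hh] Ht']; first by exists [::].
  by exists (rcons h ev); rewrite fstar_rcons Hh.
by exists h; have [_] := fstar_ext_reach Hh; rewrite Hs_env.
Qed.

Lemma obsM_cat (h1 h2 : seq (evM E)) : obsM (h1 ++ h2) = obsM h1 ++ obsM h2.
Proof. by elim: h1 => //= -[e|oa] h IH; rewrite IH. Qed.

Lemma obsM_step (h : seq (evM E)) e oa : obsM (h ++ [:: Ev e; Hat oa]) = rcons (obsM h) e.
Proof. by rewrite obsM_cat cats1. Qed.

(* Attack states of [m] have a single enabled event, and environment
   transitions are labelled by the observed event. *)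
Lemma ext_reach_uniq h1 s1 h2 s2 : ext_reach h1 s1 -> ext_reach h2 s2 ->
  obsM h1 = obsM h2 -> h1 = h2 /\ s1 = s2.
Proof.
move=> Hh1; elim: Hh1 h2 s2 => [|h s e sa oa s' Hh IH Hsa Hs'] h2 s2.
  by case=> // h' t e sa oa t' _ _ _; rewrite obsM_step; case: (obsM h').
case=> [|h' t e' ta oa' t' Hh' Hta Ht']; first by rewrite obsM_step; case: (obsM h).
rewrite !obsM_step => /rcons_inj[/(IH _ _ Hh')[<- Es] Ee]; subst t e'.
move: Hta; rewrite Hsa => -[Eta]; subst ta.
have [Hsa_reach Hsa_att] := ext_reach_attack Hh Hsa.
have [ev [_ Hev]] := Hm.2.1 sa Hsa_reach Hsa_att.
have Eoa : Hat oa = Hat oa' by rewrite -(Hev (Hat oa)) ?Hs' // -(Hev (Hat oa')) ?Ht'.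
by case: Eoa Ht' => <-; rewrite Hs' => -[<-].
Qed.

Lemma ext_reach_extend h s e : ext_reach h s -> fMs s (Ev e) <> None ->
  exists oa s', ext_reach (h ++ [:: Ev e; Hat oa]) s'.
Proof.
move=> Hh He; have Hs := ext_reach_reach Hh.
case Hsa: (fm s (Ev e)) (Hm.2.2 s (Ev e) Hs (ext_reach_env Hh) He) => [sa|] // _.
have [Hsa_reach Hsa_att] := ext_reach_attack Hh Hsa.
have [ev [Hev _]] := Hm.2.1 sa Hsa_reach Hsa_att.
case Hs': (fm sa ev) Hev => [s'|] // _.
have := fm_alternates Hsa_reach Hs'; rewrite (negbTE Hsa_att) => -[_ [oa Eev]]; subst ev.
by exists oa, s'; exact: ext_reachS Hh Hsa Hs'.
Qed.

Lemma last_ev_step (h : seq (evM E)) e oa : last_ev (h ++ [:: Ev e; Hat oa]) = Some (Hat oa).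
Proof. by case: h => //= ev h; rewrite last_cat. Qed.

Lemma Am_ext_reach h e oa s : ext_reach (h ++ [:: Ev e; Hat oa]) s ->
  Am X0 z0 fm (rcons (obsM h) e) = oa.
Proof.
move=> Hh; have [e0 [a Ea]] : exists e0 a, rcons (obsM h) e = e0 :: a.
  by case: (obsM h) => [|e0 a]; do 2 eexists.
rewrite Ea /Am; case: pselect => [Hp|[]]; last first.
  exists (h ++ [:: Ev e; Hat oa], oa); split; last by rewrite obsM_step Ea last_ev_step.
  by exists s; split; [exact: ext_reach_fstar | exact: ext_reach_env Hh].
case: (cid Hp) => -[h' oa'] /= [[s' [Hh' Hs']] [Eo El]].
have [_] := fstar_ext_reach Hh'; rewrite Hs' => {}Hh'.
have [Eh _] : h' = h ++ [:: Ev e; Hat oa] /\ s' = s.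
  by apply: (ext_reach_uniq Hh' Hh); rewrite Eo obsM_step Ea.
by move: El; rewrite Eh last_ev_step => -[].
Qed.

End SingleAttackStructure.

Lemma gA_rcons (E : finType) (B : seq E -> option E) b e :
  gA B (rcons b e) = gA B b ++ pmap B [:: rcons b e].
Proof.
rewrite /gA size_rcons -addn1 iotaD add0n pmap_cat /= take_oversize ?size_rcons //.
congr (_ ++ _); apply: eq_in_pmap => i; rewrite mem_iota add0n => /andP[_ Hi].
by rewrite -cats1 takel_cat.
Qed.

Lemma gA_cat (E : finType) (B : seq E -> option E) u v : exists w, gA B (u ++ v) = gA B u ++ w.
Proof.
elim/last_ind: v => [|v e [w IH]]; first by exists [::]; rewrite !cats0.
by rewrite -rcons_cat gA_rcons IH -catA; eexists.
Qed.

Lemma stealthy_catl (X E : finType) (delta : X -> E -> option X) (X0 : {set X})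
    (obs : pred E) (S : seq E -> {set E}) (B : seq E -> option E) u v :
  stealthy delta X0 obs S B (u ++ v) -> stealthy delta X0 obs S B u.
Proof. by rewrite /stealthy; have [w ->] := gA_cat B u v; exact: EstC_cat_neq0. Qed.

Section InducedAttack.
Variables (X E : finType) (delta : X -> E -> option X) (X0 : {set X}) (obs : pred E).
Variables (S : seq E -> {set E}) (Z : finType) (xi : Z -> E -> option Z) (z0 : Z).
Variables (Xsec : {set X}) (Ev_v : {set E}).
Variable fm : stateM X E Z -> evM E -> option (stateM X E Z).
Hypothesis HH : realizes delta X0 obs xi z0 S.
Hypothesis Hv : {in Ev_v, forall e, obs e}.
Hypothesis Hnontriv : ~~ (X0 \subset Xsec).
Hypothesis Hm : is_SAS delta X0 obs xi z0 Xsec Ev_v fm.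
Local Notation URt := (URt delta obs).
Local Notation EstCt := (EstCt delta X0 obs).
Local Notation EstI := (EstI delta X0 obs).
Local Notation Ot := (Ot delta obs).
Local Notation DeltaH := (DeltaH xi).
Local Notation DeltaM := (DeltaM xi).
Local Notation fM := (fM delta obs xi Ev_v).
Local Notation reach := (reach X0 z0 fm).
Local Notation ext_reach := (ext_reach X0 z0 fm).
Local Notation q0 := (q0M E X0 z0).
Local Notation A := (Am X0 z0 fm).
Local Notation SA := (SA S A).
Local Notation sup_inv := (sup_inv delta X0 obs S xi z0).
Local Notation stealthy := (stealthy delta X0 obs S A).

Definition aas_inv (b : seq E) (s : stateM X E Z) : Prop :=
  let: (q, qt, oz, _) := s in URt (SA b) qt = EstCt SA b /\ sup_inv (gA A b) q oz.

Lemma aas_inv_init : aas_inv [::] q0.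
Proof.
split; first by rewrite EstCt_nil.
apply: sup_inv_init => //; apply: contraNneq Hnontriv => ->; exact: sub0set.
Qed.

Lemma aas_inv_step b q qt oz e oa s' : aas_inv b (q, qt, oz, None) ->
  e \in Ot qt (DeltaM oz) -> A (rcons b e) = oa ->
  fM (q, qt, oz, Some e) (Hat oa) = Some s' -> aas_inv (rcons b e) s'.
Proof.
case: oz => [z|]; last by rewrite mem_Ot inE andbF.
move=> [Hqt Hsup] HO HA /=; case: ifP => // HV [<-].
have ESA : SA b = DeltaH z by case: Hsup.
move: HO; rewrite /= mem_Ot -ESA => /and3P[Ho He _]; split.
  by rewrite Hqt EstCt_rcons // He.
rewrite ESA gA_rcons /= HA; case: oa HV HA => [a|] HV HA; last first.
  by rewrite cats0; exact: sup_inv_erase.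
have Ha : obs a.
  by move: HV; rewrite /Vset; case: ifP => _; rewrite inE; [exact: Hv | move/eqP=> [->]].
by rewrite cats1; exact: sup_inv_replace.
Qed.

Lemma ext_reach_inv h s : ext_reach h s -> aas_inv (obsM h) s.
Proof.
elim=> {h s} [|h s e sa oa s' Hh IH Hsa Hs']; first exact: aas_inv_init.
have HA := Am_ext_reach Hm (ext_reachS Hh Hsa Hs').
have [Hsa_reach _] := ext_reach_attack Hm Hh Hsa.
move: (ext_reach_env Hm Hh) IH (fm_fM Hm (ext_reach_reach Hh) Hsa) (fm_fM Hm Hsa_reach Hs').
case: s Hh Hsa => [[[q qt] oz] [e'|]] //= _ _ _ IH; case: ifP => // HO [<-] /=.
by rewrite obsM_step; exact: aas_inv_step IH HO HA.
Qed.

Lemma ext_reach_EstI h s : ext_reach h s -> EstI SA (obsM h) = Iset s.1.1.2.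
Proof.
by move/ext_reach_inv; case: s => [[[q qt] oz] fl] [Hqt _]; rewrite EstI_Iset -Hqt Iset_URt.
Qed.

Lemma ext_reach_stealthy h q qt oz :
  ext_reach h (q, qt, oz, None) -> stealthy (obsM h) <-> oz != None.
Proof.
move/ext_reach_inv=> [_]; rewrite /Defs.stealthy; case: oz => [z [_ _ HU Hq]|->].
  by split=> // _; rewrite -HU UR_eq0.
by rewrite eqxx.
Qed.

Lemma ext_reach_mem_Ot h q qt z e : ext_reach h (q, qt, Some z, None) ->
  (e \in Ot qt (DeltaH z)) = obs e && (EstCt SA (rcons (obsM h) e) != set0).
Proof.
move/ext_reach_inv=> [Hqt [_ HD _ _]]; have ESA : DeltaH z = SA (obsM h) := HD.
rewrite mem_Ot ESA Hqt; case Ho: (obs e) => //=.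
by rewrite EstCt_rcons //; case: ifP => _; rewrite ?URt_eq0 ?eqxx.
Qed.

Lemma ext_reach_undet h q qt z x0 y : ext_reach h (q, qt, Some z, None) ->
  undet delta obs xi Xsec (q, qt, Some z, None) ->
  (x0, y) \in EstCt SA (obsM h) -> x0 \in Xsec ->
  exists2 x0', (x0', y) \in EstCt SA (obsM h) & x0' \notin Xsec.
Proof.
move/ext_reach_inv=> [Hqt [_ HD _ _]]; have ESA : DeltaH z = SA (obsM h) := HD.
move=> /andP[_ /forallP/(_ (x0, y))]; rewrite /= ESA Hqt => Hud Hy Hx0.
by move: Hud; rewrite Hy Hx0 => /existsP[x0' /andP[? ?]]; exists x0'.
Qed.

Lemma posdet_IS_detectable s : reach s -> posdet Xsec s ->
  IS_detectable delta X0 obs S Xsec A.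
Proof.
move=> Hs Hpos; have [h Hh] := reach_ext_reach Hm Hs (andP Hpos).1.
case: Hh Hpos => [|h0 s0 e sa oa s' Hh0 Hsa Hs'] /andP[_ Hsub].
  case/negP: Hnontriv; apply/subsetP => x Hx; apply: (subsetP Hsub).
  by apply/inIset; exists x; apply/imsetP; exists x.
have Hh := ext_reachS Hh0 Hsa Hs'.
move: Hh0 (ext_reach_env Hm Hh0) (fm_fM Hm (ext_reach_reach Hh0) Hsa).
case: s0 {Hsa} => [[[q qt] [z|]] [e'|]] Hh0 //= _; case: ifP => // HO _; last first.
  by move: HO; rewrite mem_Ot inE andbF.
move: HO; rewrite (ext_reach_mem_Ot _ Hh0) => /andP[Ho Hne].
exists (obsM h0), e; split=> //; split; first exact/inPLTG_EstCt.
split; first exact/(ext_reach_stealthy Hh0).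
by rewrite -(obsM_step h0 e oa) (ext_reach_EstI Hh).
Qed.

Lemma ext_reach_progress h s e v x0 x : ext_reach h s -> stealthy (obsM h) ->
  (x0, x) \in EstCt SA (rcons (obsM h) e ++ v) ->
  EstI SA (rcons (obsM h) e ++ v) \subset Xsec ->
  posdet Xsec s \/ exists oa s', ext_reach (h ++ [:: Ev e; Hat oa]) s'.
Proof.
case: (boolP (posdet Xsec s)) => Hpos Hh Hst Hx HI; [by left | right].
apply: (ext_reach_extend Hm Hh).
move: (ext_reach_env Hm Hh) Hpos Hst; case: s Hh => [[[q qt] oz] [e'|]] Hh //= _ Hpos.
move/(ext_reach_stealthy Hh); case: oz Hh Hpos => [z|] // Hh Hpos _.
have Hx0 : x0 \in Xsec by apply: (subsetP HI); apply/inEstI; exists x.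
have HOt : e \in Ot qt (DeltaH z).
  rewrite (ext_reach_mem_Ot _ Hh); have [y Hy _] := EstCt_cat Hx.
  have /inEstCt[_ /run_obs] := Hy; rewrite all_rcons => /andP[-> _].
  by apply/set0Pn; exists (x0, y).
move: Hx HI; rewrite cat_rcons => /EstCt_cat[y Hy Hcont] HI.
have Hneg : ~~ negdet Xsec (q, qt, Some z, @None E).
  have Hx0I : x0 \in EstI SA (obsM h) by apply/inEstI; exists y.
  rewrite (ext_reach_EstI Hh) in Hx0I.
  by apply/negP => /andP[_ /disjointFl/(_ Hx0)]; rewrite Hx0I.
have Hund : ~~ undet delta obs xi Xsec (q, qt, Some z, None).
  apply/negP => /(ext_reach_undet Hh)/(_ Hy Hx0)[x0' /Hcont Hx0' /negP[]].
  by apply: (subsetP HI); apply/inEstI; exists x.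
by rewrite /Defs.fMs /det (negbTE Hpos) (negbTE Hneg) (negbTE Hund) /= HOt.
Qed.

Lemma IS_detectable_posdet :
  IS_detectable delta X0 obs S Xsec A -> exists s, reach s /\ posdet Xsec s.
Proof.
case=> a [e [_ [/inPLTG_EstCt/set0Pn[[x0 x] Hx] [Hst HI]]]].
suff /(_ (rcons a e) [::]) : forall b v, rcons a e = b ++ v ->
    (exists s, reach s /\ posdet Xsec s) \/ exists h s, ext_reach h s /\ obsM h = b.
  rewrite cats0 => /(_ erefl)[//|[h [s [Hh Eh]]]]; exists s.
  split; first exact: ext_reach_reach Hh.
  by rewrite /posdet (ext_reach_env Hm Hh) -(ext_reach_EstI Hh) Eh.
elim/last_ind=> [|b e' IH] v Ea; first by right; exists [::], q0; split=> //; exact: ext_reach0.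
case: (IH (e' :: v)) => [|Hdet|[h [s [Hh Eh]]]]; [by rewrite Ea cat_rcons | by left |].
have Hst_b : stealthy (obsM h).
  move: Ea Hst; rewrite cat_rcons lastI -rcons_cat Eh => /rcons_inj[-> _].
  exact: stealthy_catl.
rewrite Ea -Eh in Hx HI.
have [Hpos|[oa [s' Hh']]] := ext_reach_progress Hh Hst_b Hx HI.
  by left; exists s; split=> //; exact: ext_reach_reach Hh.
by right; exists (h ++ [:: Ev e'; Hat oa]), s'; rewrite obsM_step Eh.
Qed.

End InducedAttack.

Theorem theorem1
  (X E : finType) (delta : X -> E -> option X) (X0 : {set X})
  (obs ctrl : pred E)
  (S : seq E -> {set E})
  (Z : finType) (xi : Z -> E -> option Z) (z0 : Z)
  (Xsec : {set X}) (Ev_v : {set E})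
  (fm : stateM X E Z -> evM E -> option (stateM X E Z))
  (HS : is_supervisor delta X0 obs ctrl S)
  (HH : realizes delta X0 obs xi z0 S)
  (Hsec : Xsec \subset X0)
  (Hv : {in Ev_v, forall e, obs e})
  (Hnontriv : ~~ (X0 \subset Xsec))
  (Hm : is_SAS delta X0 obs xi z0 Xsec Ev_v fm) :
  IS_detectable delta X0 obs S Xsec (Am X0 z0 fm) <->
  (exists s, reach X0 z0 fm s /\ posdet Xsec s).
Proof.
split; first exact: IS_detectable_posdet HH Hv Hnontriv Hm.
by case=> s [Hs Hpos]; exact: (posdet_IS_detectable HH Hv Hnontriv Hm Hs Hpos).
Qed.
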